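(* Let $\alpha\ge1$, $\beta$ odd, and let ${\cal C}=\langle (b\mid 0),(\ell\mid fh+2f)\rangle\subseteq R_{\alpha,\beta}$ be a $\mathbb{Z}_2\mathbb{Z}_4$-additive cyclic code, where $f,h,g\in\mathbb{Z}_4[x]$ with $fhg=x^\beta-1$, $b\in\mathbb{Z}_2[x]$ divides $x^\alpha-1$, and $\ell\in\mathbb{Z}_2[x]/(x^\alpha-1)$. If ${\cal C}_b=\langle (b\mid 0),(0\mid 2f)\rangle$, then $\Phi({\cal C})$ is linear if and only if $\phi({\cal C}_Y)$ is linear.
   Context: $R_{\alpha,\beta}=\mathbb{Z}_2[x]/(x^\alpha-1)\times\mathbb{Z}_4[x]/(x^\beta-1)$, identified with $\mathbb{Z}_2^\alpha\times\mathbb{Z}_4^\beta$ via coefficient vectors; it is a $\mathbb{Z}_4[x]$-module via $p\star(b\mid a)=(\tilde pb\mid pa)$, where $\tilde p$ is the reduction of $p$ mod 2. A $\mathbb{Z}_2\mathbb{Z}_4$-additive cyclic code is a $\mathbb{Z}_4[x]$-submodule of $R_{\alpha,\beta}$, and $\langle\cdot\rangle$ denotes the generated submodule. ${\cal C}_b$ is the subcode of codewords of order at most 2; ${\cal C}_Y$ is the projection onto the last $\beta$ coordinates. Gray map: for $u'\in\mathbb{Z}_4^n$ with $u'_i=\tilde u'_i+2\hat u'_i$, $\tilde u'_i,\hat u'_i\in\{0,1\}$, $\phi(u')=(\hat u'_0,\dots,\hat u'_{n-1},\tilde u'_0+\hat u'_0,\dots,\tilde u'_{n-1}+\hat u'_{n-1})$;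 $\Phi(u\mid u')=(u\mid\phi(u'))$. Linear means a $\mathbb{Z}_2$-subspace. *)

From HB Require Import structures.
From mathcomp Require Import all_boot all_order all_algebra.
Set Implicit Arguments. Unset Strict Implicit. Unset Printing Implicit Defensive.
Import GRing.Theory.
Local Open Scope ring_scope.

(* Z2 is 'F_2, Z4 is 'Z_4.  Elements of R_{alpha,beta} are identified with
   their coefficient vectors in Z2^alpha x Z4^beta. *)
Definition Relt (alpha beta : nat) : Type := ('rV['F_2]_alpha * 'rV['Z_4]_beta)%type.

(* reduction of a polynomial modulo x^n - 1, as a coefficient vector *)
Definition vec_of_poly (R : nzRingType) (n : nat) (p : {poly R}) : 'rV[R]_n :=
  \row_(i < n) \sum_(j < size p | ((j %% n)%N == i)) p`_j.

Definition poly_of_vec (R : nzRingType) (n : nat) (v : 'rV[R]_n) : {poly R} :=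
  \sum_(i < n) v 0 i *: 'X^i.

Definition red2 (c : 'Z_4) : 'F_2 := (val c)%:R.
Definition red2p (p : {poly 'Z_4}) : {poly 'F_2} := map_poly red2 p.

Definition Rzero alpha beta : Relt alpha beta := (0, 0).
Definition Radd alpha beta (x y : Relt alpha beta) : Relt alpha beta :=
  (x.1 + y.1, x.2 + y.2).

(* Z4[x]-module action  p * (b | a) = (p~ b | p a) *)
Definition Ract alpha beta (p : {poly 'Z_4}) (x : Relt alpha beta) : Relt alpha beta :=
  (vec_of_poly alpha (red2p p * poly_of_vec x.1),
   vec_of_poly beta (p * poly_of_vec x.2)).

Definition Relt_of alpha beta (u : {poly 'F_2}) (v : {poly 'Z_4}) : Relt alpha beta :=
  (vec_of_poly alpha u, vec_of_poly beta v).

(* Z4[x]-submodules ( = Z2Z4-additive cyclic codes ) *)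
Definition is_submodule alpha beta (M : Relt alpha beta -> Prop) : Prop :=
  [/\ M (Rzero alpha beta),
      (forall x y, M x -> M y -> M (Radd x y)) &
      (forall p x, M x -> M (Ract p x))].

Definition gen alpha beta (S : Relt alpha beta -> Prop) (x : Relt alpha beta) : Prop :=
  forall M, is_submodule M -> (forall y, S y -> M y) -> M x.

Definition gen2 alpha beta (g1 g2 : Relt alpha beta) : Relt alpha beta -> Prop :=
  gen (fun y => y = g1 \/ y = g2).

Definition order_le2 alpha beta (x : Relt alpha beta) : Prop :=
  Radd x x = Rzero alpha beta.
Definition Cb alpha beta (C : Relt alpha beta -> Prop) (x : Relt alpha beta) : Prop :=
  C x /\ order_le2 x.

Definition CY alpha beta (C : Relt alpha beta -> Prop) (v : 'rV['Z_4]_beta) : Prop :=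
  exists x, C x /\ x.2 = v.

(* Gray map; for c = t + 2 h with t,h in {0,1}: t = val c %% 2, h = val c %/ 2 *)
Definition gray_hat (c : 'Z_4) : 'F_2 := (val c %/ 2)%:R.
Definition gray_tilde (c : 'Z_4) : 'F_2 := (val c %% 2)%:R.

Definition phi n (v : 'rV['Z_4]_n) : 'rV['F_2]_(n + n) :=
  \row_(j < n + n) match split j with
                   | inl i => gray_hat (v 0 i)
                   | inr i => gray_tilde (v 0 i) + gray_hat (v 0 i)
                   end.

Definition Phi alpha beta (x : Relt alpha beta) : 'rV['F_2]_(alpha + (beta + beta)) :=
  row_mx x.1 (phi x.2).

Definition img (A B : Type) (f : A -> B) (S : A -> Prop) (y : B) : Prop :=
  exists x, S x /\ f x = y.

Definition linear_set n (S : 'rV['F_2]_n -> Prop) : Prop :=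
  S 0 /\ forall (a : 'F_2) u v, S u -> S v -> S (a *: u + v).

From HB Require Import structures.
From mathcomp Require Import all_boot all_order all_algebra.
Import GRing.Theory.
Local Open Scope ring_scope.

(* The Z4-coordinates of Phi(C) form the set phi(C_Y), so linearity of Phi(C)
   passes to phi(C_Y) by projection.  Conversely, if phi(w) = phi(u) + phi(v)
   for codewords u, v, w, then reduction mod 2 shows that z = w - u - v has
   order at most 2, so z lies in C_b = <(b | 0), (0 | 2f)>.  The codewords
   (x | y) with (0 | y) in C form a submodule containing both generators, so
   (0 | z_Y) is in C, and u + v + (0 | z_Y) is a codeword with image
   Phi(u) + Phi(v). *)

HB.instance Definition _ alpha beta := GRing.Zmodule.on (Relt alpha beta).

Lemma RaddE alpha beta (x y : Relt alpha beta) : Radd x y = x + y.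
Proof. by []. Qed.

Lemma RzeroE alpha beta : Rzero alpha beta = 0.
Proof. by []. Qed.

Lemma gray_tildeD (a b : 'Z_4) : gray_tilde (a + b) = gray_tilde a + gray_tilde b.
Proof.
by case: a => [[|[|[|[|?]]]] ?] //; case: b => [[|[|[|[|?]]]] ?] //; apply/val_inj.
Qed.

Lemma gray_tilde_eq0 (a : 'Z_4) : gray_tilde a = 0 -> a *+ 2 = 0.
Proof. by case: a => [[|[|[|[|?]]]] ?] // _; apply/val_inj. Qed.

Lemma phi_lshift n (v : 'rV['Z_4]_n) i : phi v 0 (lshift n i) = gray_hat (v 0 i).
Proof. by rewrite mxE (unsplitK (inl _ i)). Qed.

Lemma phi_rshift n (v : 'rV['Z_4]_n) i :
  phi v 0 (rshift n i) = gray_tilde (v 0 i) + gray_hat (v 0 i).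
Proof. by rewrite mxE (unsplitK (inr _ i)). Qed.

Lemma phi0 n : phi (0 : 'rV['Z_4]_n) = 0.
Proof. by apply/rowP => j; rewrite !mxE; case: split => i; rewrite mxE ?addr0. Qed.

Lemma phi_add_2torsion {n} (u v w : 'rV['Z_4]_n) :
  phi w = phi u + phi v -> (w - u - v) *+ 2 = 0.
Proof.
move=> Ew; apply/rowP => i; rewrite !mxE; apply: gray_tilde_eq0.
have Ehat := congr1 (fun r : 'rV_(n + n) => r 0 (lshift n i)) Ew.
have Eall := congr1 (fun r : 'rV_(n + n) => r 0 (rshift n i)) Ew.
rewrite [RHS]mxE !phi_lshift in Ehat; rewrite [RHS]mxE !phi_rshift Ehat in Eall.
have Etilde : gray_tilde (w 0 i) = gray_tilde (u 0 i) + gray_tilde (v 0 i).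
  by apply: (addIr (gray_hat (u 0 i) + gray_hat (v 0 i))); rewrite Eall addrACA.
have Esplit : gray_tilde (w 0 i)
    = gray_tilde (w 0 i - u 0 i - v 0 i) + gray_tilde (u 0 i + v 0 i).
  by rewrite -gray_tildeD addrACA subrK addNr addr0.
by apply: (addIr (gray_tilde (u 0 i + v 0 i))); rewrite -Esplit Etilde gray_tildeD add0r.
Qed.

Lemma F2_cases (a : 'F_2) : a = 0 \/ a = 1.
Proof. by case: a => [[|[|//]] ?]; [left | right]; apply/val_inj. Qed.

Lemma linear_setF2 n (S : 'rV['F_2]_n -> Prop) :
  S 0 -> (forall u v, S u -> S v -> S (u + v)) -> linear_set S.
Proof.
move=> S0 SD; split=> // a u v Su Sv.
by case: (F2_cases a) => ->; [rewrite scale0r add0r | rewrite scale1r; apply: SD].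
Qed.

Lemma linear_set_ext n (S T : 'rV['F_2]_n -> Prop) :
  (forall u, S u <-> T u) -> linear_set S -> linear_set T.
Proof.
move=> eqST [S0 SZD]; split=> [|a u v Tu Tv]; apply/eqST => //.
by apply: SZD; apply/eqST.
Qed.

Lemma linear_set_img {m n} (f : {linear 'rV['F_2]_m -> 'rV['F_2]_n}) S :
  linear_set S -> linear_set (img f S).
Proof.
move=> [S0 SZD]; split; first by exists 0; rewrite linear0.
move=> a _ _ [u [Su <-]] [v [Sv <-]].
by exists (a *: u + v); rewrite linearP; split; first exact: SZD.
Qed.

Lemma vec_of_poly0 (R : nzRingType) n : vec_of_poly n (0 : {poly R}) = 0.
Proof. by apply/rowP => i; rewrite !mxE size_poly0 big_ord0. Qed.

Lemma poly_of_vec0 (R : nzRingType) n : poly_of_vec (0 : 'rV[R]_n) = 0.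
Proof. by rewrite /poly_of_vec big1 // => i _; rewrite mxE scale0r. Qed.

Lemma Relt_oppE alpha beta (x : Relt alpha beta) : - x = x *+ 3.
Proof.
apply: (addrI x); rewrite subrr -mulrS pairMnE; congr pair; apply/rowP => i.
- by rewrite !mxE; case: (x.1 0 i) => [[|[|//]] ?]; apply/val_inj.
- by rewrite !mxE; case: (x.2 0 i) => [[|[|[|[|//]]]] ?]; apply/val_inj.
Qed.

Section Submodule.

Context {alpha beta : nat} {M : Relt alpha beta -> Prop} (subM : is_submodule M).

Lemma submodule0 : M 0.
Proof. by case: subM. Qed.

Lemma submoduleD x y : M x -> M y -> M (x + y).
Proof. by case: subM => _ MD _; apply: MD. Qed.

Lemma submoduleMn x n : M x -> M (x *+ n).
Proof.
move=> Mx; elim: n => [|n IHn]; first exact: submodule0.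
by rewrite mulrS; apply: submoduleD.
Qed.

Lemma submoduleB x y : M x -> M y -> M (x - y).
Proof. by move=> Mx My; rewrite Relt_oppE; apply/submoduleD/submoduleMn. Qed.

Lemma submodule_proj2 : is_submodule (fun x : Relt alpha beta => M (0, x.2)).
Proof.
case: subM => M0 MD MZ; split=> [//|x y Mx My|p x Mx].
- by have := MD _ _ Mx My; rewrite /Radd /= addr0.
- by have := MZ p _ Mx; rewrite /Ract /= poly_of_vec0 mulr0 vec_of_poly0.
Qed.

End Submodule.

Lemma gen_submodule alpha beta (S : Relt alpha beta -> Prop) : is_submodule (gen S).
Proof.
split.
- by move=> M [].
- by move=> x y Sx Sy M subM SM; apply: (submoduleD subM); [apply: Sx | apply: Sy].
- by move=> p x Sx M subM SM; case: (subM) => _ _ MZ; apply: MZ; apply: Sx.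
Qed.

Lemma gen2_r {alpha beta} (g1 g2 : Relt alpha beta) : gen2 g1 g2 g2.
Proof. by move=> M _ SM; apply: SM; right. Qed.

Lemma Phi0 alpha beta : Phi (0 : Relt alpha beta) = 0.
Proof. by rewrite /Phi phi0 row_mx0. Qed.

Lemma img_phi_CY alpha beta (C : Relt alpha beta -> Prop) v :
  img rsubmx (img (@Phi alpha beta) C) v <-> img (@phi beta) (CY C) v.
Proof.
split=> [[_ [[x [Cx <-]] <-]] | [_ [[x [Cx <-]] <-]]].
- by exists x.2; split; [exists x | rewrite /Phi row_mxKr].
- by exists (Phi x); split; [exists x | rewrite /Phi row_mxKr].
Qed.

Lemma linear_img_CY alpha beta (C : Relt alpha beta -> Prop) :
  linear_set (img (@Phi alpha beta) C) -> linear_set (img (@phi beta) (CY C)).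
Proof. by move/(linear_set_img rsubmx); apply: linear_set_ext => v; apply: img_phi_CY. Qed.

Section Converse.

Variables (alpha beta : nat) (C : Relt alpha beta -> Prop).
Hypothesis subC : is_submodule C.
Hypothesis Cb_proj2 : forall z, Cb C z -> C (0, z.2).

Lemma Phi_add_codeword {u v w} : C u -> C v -> C w ->
  phi w.2 = phi u.2 + phi v.2 -> img (@Phi alpha beta) C (Phi u + Phi v).
Proof.
move=> Cu Cv Cw Ew; set z := w - u - v.
have Cz : C z by do 2?apply: (submoduleB subC).
have z_order2 : order_le2 z.
  rewrite /order_le2 RaddE RzeroE -mulr2n pairMnE; congr pair.
  - by rewrite -scaler_nat pchar_Fp_0 ?scale0r.
  - exact: phi_add_2torsion Ew.
have C0z : C (0, z.2) by apply: Cb_proj2.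
exists (u + v + (0, z.2)); split; first by do 2?apply: (submoduleD subC).
have Ez2 : (u + v + (0, z.2)).2 = w.2.
  by rewrite [LHS]/= addrC addrACA subrK addNr addr0.
by rewrite /Phi add_row_mx Ez2 Ew [(_ + _).1]/= addr0.
Qed.

Lemma linear_img_Phi :
  linear_set (img (@phi beta) (CY C)) -> linear_set (img (@Phi alpha beta) C).
Proof.
move=> [_ linCY]; apply: linear_setF2.
  by exists 0; split; [exact: submodule0 | exact: Phi0].
move=> _ _ [u [Cu <-]] [v [Cv <-]].
have imgY x : C x -> img (@phi beta) (CY C) (phi x.2) by exists x.2; split; [exists x|].
have [_ [[w [Cw <-]] Ew]] := linCY 1 _ _ (imgY u Cu) (imgY v Cv).
by apply: (Phi_add_codeword Cu Cv Cw); rewrite Ew scale1r.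
Qed.

End Converse.

Theorem mainTheorem4 (alpha beta : nat) (f h g : {poly 'Z_4})
    (b l : {poly 'F_2}) :
  (1 <= alpha)%N -> odd beta ->
  f * h * g = 'X^beta - 1 ->
  b %| 'X^alpha - 1 ->
  let C := gen2 (Relt_of alpha beta b 0) (Relt_of alpha beta l (f * h + f *+ 2)) in
  (forall x, Cb C x <-> gen2 (Relt_of alpha beta b 0) (Relt_of alpha beta 0 (f *+ 2)) x) ->
  (linear_set (img (@Phi alpha beta) C) <-> linear_set (img (@phi beta) (CY C))).
Proof.
move=> _ _ _ _ C CbE.
have subC : is_submodule C by apply: gen_submodule.
have Cb_proj2 z : Cb C z -> C (0, z.2).
  move=> /CbE /(_ _ (submodule_proj2 subC)); apply.
  move=> _ [->|->]; first by rewrite /= vec_of_poly0; apply: submodule0.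
  have [] := (CbE (Relt_of alpha beta 0 (f *+ 2))).2 (gen2_r _ _).
  by rewrite /Relt_of vec_of_poly0.
split; first exact: linear_img_CY.
exact: linear_img_Phi.
Qed.
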